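(* Let $\mu_1\in\mathcal C^1(\mathbb R_+)$ satisfy $\mu_1(0)=0$, $\lim_{s\to\infty}\mu_1(s)=m_1$ and $\mu_1'(s)>0$ for all $s>0$. Let $\alpha\in(0,1)$, $k_1>0$, $D_2>0$, $S_1^{\mathrm{in}}>0$, and let $X_1^{1*}>0$ satisfy $X_1^{1*}<S_1^{\mathrm{in}}/(\alpha k_1)$. Define $f_1(x)=\mu_1(S_1^{\mathrm{in}}-\alpha k_1x)$ for $x\in[0,S_1^{\mathrm{in}}/(\alpha k_1)]$ and $g_1(x)=\alpha D_2\,\frac{x-X_1^{1*}}{x}$ for $x>0$. Then the equation $f_1(x)=g_1(x)$ has a unique solution $X_1^{2*}$ in the interval $(X_1^{1*},S_1^{\mathrm{in}}/(\alpha k_1))$.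
   Context: In the paper, $X_1^{1*}=(S_1^{\mathrm{in}}-\lambda_1^1)/(\alpha k_1)$ is the first-bioreactor biomass component of an equilibrium with $S_1^{\mathrm{in}}>\lambda_1^1$, where $\lambda_1^1$ solves $\mu_1(S)=\alpha D_1$; in particular $X_1^{1*}>0$. *)

From Stdlib Require Import Reals.
From Coquelicot Require Import Coquelicot.
Open Scope R_scope.

(* mu is C^1 on R_+ = [0, +oo): there is dmu with
   - dmu s the derivative of mu at every s > 0,
   - dmu 0 the right derivative of mu at 0,
   - dmu continuous on [0, +oo) (right-continuous at 0).
   Values of mu at negative arguments are irrelevant. *)
Definition C1_Rplus (mu : R -> R) : Prop :=
  exists dmu : R -> R,
    (forall s, 0 < s -> is_derive mu s (dmu s)) /\
    filterlim (fun h => (mu (0 + h) - mu 0) / h) (at_right 0) (locally (dmu 0)) /\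
    (forall s, 0 < s -> continuous dmu s) /\
    filterlim dmu (at_right 0) (locally (dmu 0)).

Definition f1 (mu : R -> R) (Sin alpha k1 : R) (x : R) : R :=
  mu (Sin - alpha * k1 * x).

Definition g1 (alpha D2 X11 : R) (x : R) : R :=
  alpha * D2 * ((x - X11) / x).

(* The right-hand side g_1 increases strictly on (0, +oo), while f_1 decreases
   strictly on its domain because mu_1 increases, so f_1 - g_1 has at most one
   zero.  At X_1^{1*} we have g_1 = 0 < f_1, since mu_1 > 0 on (0, +oo); near the
   right end point S_1^in/(alpha k_1) the argument of mu_1 tends to 0, so f_1
   becomes smaller than the positive value of g_1 there.  The intermediate value
   theorem gives the zero. *)

From Stdlib Require Import Reals Lra.
From Coquelicot Require Import Coquelicot.
Open Scope R_scope.

Lemma C1_Rplus_right_continuous (mu : R -> R) :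
  C1_Rplus mu -> filterlim mu (at_right 0) (locally (mu 0)).
Proof.
  intros [dmu [_ [Hdiff0 _]]].
  assert (Hid : filterlim (fun h : R => h) (at_right 0) (locally 0)).
  { apply (filterlim_filter_le_1 (F := locally 0)).
    - apply filter_le_within.
    - apply filterlim_id. }
  assert (Hprod : filterlim (fun h => h * ((mu (0 + h) - mu 0) / h))
                    (at_right 0) (locally 0)).
  { assert (H := filterlim_comp_2 _ _ _ Hid Hdiff0 (filterlim_scal 0 (dmu 0))).
    unfold scal in H; simpl in H; unfold mult in H; simpl in H.
    rewrite Rmult_0_l in H; exact H. }
  assert (Hsum := filterlim_comp_2 _ _ _ (filterlim_const (mu 0)) Hprod
                    (filterlim_plus (mu 0) 0)).
  unfold plus in Hsum; simpl in Hsum; rewrite Rplus_0_r in Hsum.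
  refine (filterlim_ext_loc _ _ _ Hsum).
  exists (mkposreal 1 Rlt_0_1); intros h _ Hh.
  rewrite Rplus_0_l; field; lra.
Qed.

Lemma at_right_small_value (f : R -> R) (x l : R) :
  filterlim f (at_right x) (locally l) ->
  forall e d, 0 < e -> 0 < d -> exists s, x < s < x + d /\ Rabs (f s - l) < e.
Proof.
  intros Hf e d He Hd.
  assert (Hnear : at_right x (fun s => Rabs (f s - l) < e)).
  { apply (Hf (fun y => Rabs (y - l) < e)).
    exists (mkposreal e He); intros y Hy; exact Hy. }
  assert (Hclose : at_right x (fun s => x < s < x + d)).
  { exists (mkposreal d Hd); intros s Hs Hxs.
    apply Rabs_lt_between' in Hs; simpl in Hs; lra. }
  destruct (filter_ex _ (filter_and _ _ Hclose Hnear)) as [s Hs].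
  exists s; exact Hs.
Qed.

Lemma increasing_gt_right_limit (f : R -> R) (a l : R) :
  filterlim f (at_right a) (locally l) ->
  (forall x y, a < x -> x < y -> f x < f y) ->
  forall t, a < t -> l < f t.
Proof.
  intros Hlim Hincr t Ht.
  set (m := (a + t) / 2).
  assert (Hgap : 0 < f t - f m).
  { assert (f m < f t) by (apply Hincr; unfold m; lra); lra. }
  destruct (at_right_small_value f a l Hlim (f t - f m) (m - a) Hgap)
    as [s [Hs Hfs]]; [unfold m; lra |].
  assert (f s < f m) by (apply Hincr; lra).
  apply Rabs_lt_between' in Hfs; lra.
Qed.

Lemma decreasing_unique_root (h : R -> R) (a b c : R) :
  (forall x, a <= x < b -> continuity_pt h x) ->
  (forall x y, a <= x -> x < y -> y < b -> h y < h x) ->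
  a < c < b -> 0 < h a -> h c < 0 ->
  exists! x, a < x < b /\ h x = 0.
Proof.
  intros Hcont Hdecr Hc Ha Hhc.
  destruct (Ranalysis5.IVT_interv (fun x => - h x) a c) as [z [Hz Hhz]];
    try lra.
  { intros x Hx; apply continuity_pt_opp, Hcont; lra. }
  assert (Hza : z <> a) by (intros ->; lra).
  exists z; split; [split; lra |].
  intros y [Hy Hhy].
  destruct (Rtotal_order z y) as [Hzy | [Hzy | Hyz]]; [| exact Hzy |].
  - assert (h y < h z) by (apply Hdecr; lra); lra.
  - assert (h z < h y) by (apply Hdecr; lra); lra.
Qed.

Lemma g1_increasing (alpha D2 X11 : R) :
  0 < alpha * D2 -> 0 < X11 ->
  forall x y, 0 < x -> x < y -> g1 alpha D2 X11 x < g1 alpha D2 X11 y.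
Proof.
  intros HaD HX x y Hx Hxy; unfold g1.
  apply Rmult_lt_compat_l; [exact HaD |].
  enough (0 < (y - X11) / y - (x - X11) / x) by lra.
  replace ((y - X11) / y - (x - X11) / x) with (X11 * (y - x) / (x * y))
    by (field; lra).
  apply Rdiv_lt_0_compat; apply Rmult_lt_0_compat; lra.
Qed.

Lemma g1_at_X11 (alpha D2 X11 : R) : X11 <> 0 -> g1 alpha D2 X11 X11 = 0.
Proof. intros HX; unfold g1; field; exact HX. Qed.

Lemma sub_mult_pos_of_lt_div (S a x : R) : 0 < a -> x < S / a -> 0 < S - a * x.
Proof.
  intros Ha Hx.
  apply Rmult_lt_compat_l with (r := a) in Hx; [| exact Ha].
  replace (a * (S / a)) with S in Hx by (field; lra).
  lra.
Qed.

Lemma f1_decreasing (mu : R -> R) (Sin alpha k1 : R) :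
  (forall s t, 0 < s -> s < t -> mu s < mu t) -> 0 < alpha * k1 ->
  forall x y, x < y -> y < Sin / (alpha * k1) ->
  f1 mu Sin alpha k1 y < f1 mu Sin alpha k1 x.
Proof.
  intros Hmu Hak x y Hxy HyL; unfold f1.
  apply Hmu.
  - exact (sub_mult_pos_of_lt_div Sin (alpha * k1) y Hak HyL).
  - apply Rmult_lt_compat_l with (r := alpha * k1) in Hxy; lra.
Qed.

Lemma f1_sub_g1_decreasing (mu : R -> R) (Sin alpha k1 D2 X11 : R) :
  (forall s t, 0 < s -> s < t -> mu s < mu t) ->
  0 < alpha * k1 -> 0 < alpha * D2 -> 0 < X11 ->
  forall x y, X11 <= x -> x < y -> y < Sin / (alpha * k1) ->
  f1 mu Sin alpha k1 y - g1 alpha D2 X11 y <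
  f1 mu Sin alpha k1 x - g1 alpha D2 X11 x.
Proof.
  intros Hmu Hak HaD HX x y Hx Hxy HyL.
  assert (f1 mu Sin alpha k1 y < f1 mu Sin alpha k1 x)
    by (apply f1_decreasing; assumption).
  assert (g1 alpha D2 X11 x < g1 alpha D2 X11 y)
    by (apply g1_increasing; lra).
  lra.
Qed.

Lemma f1_sub_g1_continuous (mu : R -> R) (Sin alpha k1 D2 X11 : R) :
  (forall s, 0 < s -> ex_derive mu s) -> 0 < alpha * k1 ->
  forall x, 0 < x < Sin / (alpha * k1) ->
  continuity_pt (fun x => f1 mu Sin alpha k1 x - g1 alpha D2 X11 x) x.
Proof.
  intros Hmu Hak x Hx.
  apply continuity_pt_filterlim.
  apply (ex_derive_continuous (K := R_AbsRing) (V := R_NormedModule)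
           (fun x => f1 mu Sin alpha k1 x - g1 alpha D2 X11 x)).
  unfold f1, g1; auto_derive.
  split; [| split; [lra | exact I]].
  apply Hmu, sub_mult_pos_of_lt_div; lra.
Qed.

Lemma f1_lt_g1_near_right_end (mu : R -> R) (Sin alpha k1 D2 X11 : R) :
  filterlim mu (at_right 0) (locally 0) ->
  0 < alpha * k1 -> 0 < alpha * D2 -> 0 < X11 -> X11 < Sin / (alpha * k1) ->
  exists c, X11 < c < Sin / (alpha * k1) /\
            f1 mu Sin alpha k1 c < g1 alpha D2 X11 c.
Proof.
  intros Hmu Hak HaD HX HXL.
  set (L := Sin / (alpha * k1)) in *.
  set (m := (X11 + L) / 2).
  assert (Hm : X11 < m < L) by (unfold m; lra).
  assert (Hgm : 0 < g1 alpha D2 X11 m).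
  { rewrite <- (g1_at_X11 alpha D2 X11) by lra.
    apply g1_increasing; lra. }
  destruct (at_right_small_value mu 0 0 Hmu (g1 alpha D2 X11 m)
              (Sin - alpha * k1 * m) Hgm) as [s [Hs Hmus]].
  { apply sub_mult_pos_of_lt_div; [exact Hak | exact (proj2 Hm)]. }
  rewrite Rplus_0_l, Rminus_0_r in *.
  set (a := alpha * k1) in *.
  exists ((Sin - s) / a).
  assert (Hc : m < (Sin - s) / a < L).
  { unfold L; split; apply Rmult_lt_reg_l with a; try lra;
      field_simplify; lra. }
  split; [lra |].
  unfold f1; fold a.
  replace (Sin - a * ((Sin - s) / a)) with s by (field; lra).
  assert (g1 alpha D2 X11 m < g1 alpha D2 X11 ((Sin - s) / a))
    by (apply g1_increasing; lra).
  pose proof (Rle_abs (mu s)); lra.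
Qed.

Theorem lemma1 (mu : R -> R) (m1 alpha k1 D2 Sin X11 : R)
  (Hmu_C1 : C1_Rplus mu)
  (Hmu0 : mu 0 = 0)
  (Hmu_lim : is_lim mu p_infty m1)
  (Hmu_incr : exists dmu : R -> R,
      forall s, 0 < s -> is_derive mu s (dmu s) /\ dmu s > 0)
  (Halpha : 0 < alpha < 1) (Hk1 : 0 < k1) (HD2 : 0 < D2) (HSin : 0 < Sin)
  (HX11 : 0 < X11) (HX11lt : X11 < Sin / (alpha * k1)) :
  exists! x : R, X11 < x < Sin / (alpha * k1) /\
                 f1 mu Sin alpha k1 x = g1 alpha D2 X11 x.
Proof.
  destruct Hmu_incr as [dmu Hdmu].
  assert (Hak : 0 < alpha * k1) by (apply Rmult_lt_0_compat; lra).
  assert (HaD : 0 < alpha * D2) by (apply Rmult_lt_0_compat; lra).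
  assert (Hmu_increasing : forall s t, 0 < s -> s < t -> mu s < mu t).
  { intros s t Hs Hst.
    apply (incr_function mu 0 p_infty dmu); simpl; auto;
      intros; apply Hdmu; assumption. }
  assert (Hmu_right0 : filterlim mu (at_right 0) (locally 0)).
  { rewrite <- Hmu0 at 2; exact (C1_Rplus_right_continuous mu Hmu_C1). }
  destruct (f1_lt_g1_near_right_end mu Sin alpha k1 D2 X11)
    as [c [Hc Hfgc]]; try assumption.
  destruct (decreasing_unique_root
              (fun x => f1 mu Sin alpha k1 x - g1 alpha D2 X11 x)
              X11 (Sin / (alpha * k1)) c) as [x [[Hx Hx0] Huniq]].
  - intros x Hx; apply f1_sub_g1_continuous; try assumption.
    + intros s Hs; exists (dmu s); apply Hdmu, Hs.
    + lra.
  - apply f1_sub_g1_decreasing; assumption.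
  - exact Hc.
  - assert (0 < f1 mu Sin alpha k1 X11).
    { apply (increasing_gt_right_limit mu 0 0 Hmu_right0 Hmu_increasing).
      apply sub_mult_pos_of_lt_div; assumption. }
    rewrite g1_at_X11 by lra; lra.
  - lra.
  - exists x; split; [split; [exact Hx | lra] |].
    intros y [Hy Hfgy]; apply Huniq; split; [exact Hy | lra].
Qed.
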